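(* Consider the weighted age-of-job scheduling problem described below, in which the service (job-completion) time of every network $i\in\{1,\dots,N\}$ is geometric with success probability $q_i$. This scheduling problem is indexable: for every network $i$ and every user $j\in\mathcal{M}_i$, the passive set $\mathcal{P}_j^i(\bar\lambda_i)$ of the single-user problem is monotonically non-decreasing in the activation cost $\bar\lambda_i$ (i.e., $\bar\lambda_{i,1}\le\bar\lambda_{i,2}$ implies $\mathcal{P}_j^i(\bar\lambda_{i,1})\subseteq\mathcal{P}_j^i(\bar\lambda_{i,2})$), and $\mathcal{P}_j^i(\infty)=\mathcal{S}_j^i$.
   Context: Time-slotted system: a central server, $N$ task-specific machine networks, and user groups $\mathcal{M}_i$ ($i=1,\dots,N$). In each slot, user $j\in\mathcal{M}_i$ generates a job with probability $p_j^i>0$; the server keeps a unit-size buffer per (user, group) pair, and arrivals to a full buffer are dropped. Network $i$ can serve at most $\bar M_i$ jobs per slot and the server at most $\bar M$ jobs per slot in total; preemptive-resume service is allowed. The age of job $\Delta_j^i(t)$ is the time the current job of user $j\in\mathcal{M}_i$ has spent in the buffer up to time $t$ (0 if no job). The objective is to minimize the long-term average of $\sum_i\sum_j w_j^i\Delta_j^i(t)$ subject to the per-slot capacity constraints. Relaxing the constraints to time-average constraints with Lagrange multipliers $\lambda,\mu_i\ge0$ decouples the problem into single-user problems: minimize $\limsup_{T\to\infty}\frac1T\sum_{t=1}^T\mathbb{E}[w_j^i\Delta_j^i(t)+\bar\lambda_i c_j^i(t)]$, with $\bar\lambda_i=\lambda+\mu_i$ and $c_j^i(t)\in\{0,1\}$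 the action (1 = active/serve, 0 = passive). Network $i$ completes an in-service job at the end of each slot with probability $q_i$ (geometric service), so the state is $s_j^i=(\Delta_j^i,\bar\Delta_j^i)$ with $\bar\Delta_j^i=0$ if a job is present and $\bar\Delta_j^i=\infty$ if the buffer is empty (state $(0,\infty)$); $\mathcal{S}_j^i$ is the state space. Per-slot cost is $w_j^i\Delta_j^i+\bar\lambda_i c_j^i$; only the passive action is allowed in the empty state. Transitions: from $(0,\infty)$, stay w.p. $1-p_j^i$ or go to $(0,0)$ w.p. $p_j^i$; passive with a job: $(\Delta,0)\to(\Delta+1,0)$; active with a job: to $(0,0)$ w.p. $q_ip_j^i$, to $(0,\infty)$ w.p. $q_i(1-p_j^i)$, to $(\Delta+1,0)$ w.p. $1-q_i$. With $\bar V_j^i(s;c,\bar\lambda_i)$ the cost of action $c$ in state $s$ plus the expected relative value (average-cost optimality) of the next state, the passive set is $\mathcal{P}_j^i(\bar\lambda_i)=\{s\in\mathcal{S}_j^i:\bar\Delta_j^i=0,\ \bar V_j^i(s;0,\bar\lambda_i)\le\bar V_j^i(s;1,\bar\lambda_i)\}\cup\{s\in\mathcal{S}_j^i:\bar\Delta_j^i=\infty\}$. A user is indexable if its passive set is monotone in $\bar\lambda_i$ with $\mathcal{P}_j^i(\infty)=\mathcal{S}_j^i$; the scheduling problem is indexable if every user of every network is indexable. *)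

From Stdlib Require Import Reals Lra.
Open Scope R_scope.

(** Single-user state space S_j^i.
    None      = the empty-buffer state (0, infinity);
    Some d    = the state (d, 0): a job of age d is in the buffer. *)
Definition state := option nat.

Definition Vbar (w p q lam : R) (h : state -> R) (d : nat) (c : bool) : R :=
  if c then
    w * INR d + lam
    + (q * p * h (Some 0%nat) + q * (1 - p) * h None + (1 - q) * h (Some (S d)))
  else
    w * INR d + h (Some (S d)).

(** In the empty state only the passive action is allowed.
    h is required to have at most linear growth in the age (the standard
    class in which the relative value function of this countable-state MDP
    lives; without a growth condition the ACOE has spurious solutions). *)
Definition avg_cost_opt (w p q lam g : R) (h : state -> R) : Prop :=
  g + h None = (1 - p) * h None + p * h (Some 0%nat) /\
  (forall d : nat,
     g + h (Some d) = Rmin (Vbar w p q lam h d false) (Vbar w p q lam h d true)) /\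
  (exists C : R, forall d : nat, Rabs (h (Some d)) <= C * (1 + INR d)).

Definition passive_set (w p q lam : R) (h : state -> R) (s : state) : Prop :=
  match s with
  | None => True
  | Some d => Vbar w p q lam h d false <= Vbar w p q lam h d true
  end.

(** Indexability of a single user: the relative value function exists for every
    activation cost lam >= 0, the passive set is monotone non-decreasing in lam,
    and P(infinity) = S (every state is passive for all large enough lam). *)
Definition user_indexable (w p q : R) : Prop :=
  (forall lam, 0 <= lam -> exists g h, avg_cost_opt w p q lam g h) /\
  (forall lam1 lam2 g1 g2 (h1 h2 : state -> R),
     0 <= lam1 -> lam1 <= lam2 ->
     avg_cost_opt w p q lam1 g1 h1 -> avg_cost_opt w p q lam2 g2 h2 ->
     forall s, passive_set w p q lam1 h1 s -> passive_set w p q lam2 h2 s) /\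
  (forall s : state, exists L : R, forall lam g (h : state -> R),
     L <= lam -> avg_cost_opt w p q lam g h -> passive_set w p q lam h s).

Definition problem_indexable (N : nat) (M : nat -> nat)
  (w p : nat -> nat -> R) (q : nat -> R) : Prop :=
  forall i j, (i < N)%nat -> (j < M i)%nat -> user_indexable (w i j) (p i j) (q i).

From Stdlib Require Import Reals Lra Lia Psatz.
Open Scope R_scope.

(** Subtracting the constant [p h(0,0) + (1-p) h(0,∞) + λ/q] from the relative
    value function turns the ACOE into the scalar recursion
    [g + z d = w d + min (z (d+1)) ((1-q) z (d+1))], in which the state [(d,0)]
    is passive iff [z (d+1) <= 0]; the empty state only adds the boundary
    relation [p q z 0 + p λ = (1-p) q g].  Linearly bounded solutions of the
    recursion are rigid: a solution that is nonpositive where [w d > g] decreases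
    quadratically, and two solutions that cross where both are positive drift
    apart geometrically.  Hence [z] decreases pointwise when [g] increases, the
    boundary relation forces [g] to increase with [λ], and so the passive sets
    grow with [λ].  Explicit threshold solutions (quadratic below a threshold,
    affine above it) realise every activation cost, which gives existence; the
    one vanishing at [d+1] makes [(d,0)] passive at some cost, hence at every
    larger one. *)

Lemma archimedean_mult (eps r : R) : 0 < eps -> exists n : nat, r < eps * INR n.
Proof.
  intros Heps. destruct (INR_unbounded (r / eps)) as [n Hn]. exists n.
  apply (Rmult_lt_compat_l eps) in Hn; [|lra].
  replace (eps * (r / eps)) with r in Hn by (field; lra). exact Hn.
Qed.

Lemma nondecreasing_from (x : nat -> R) (N : nat) :
  (forall n, (N <= n)%nat -> x n <= x (S n)) ->
  forall m n, (N <= m)%nat -> (m <= n)%nat -> x m <= x n.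
Proof.
  intros Hx m n Hm Hmn. induction Hmn as [|n Hmn IH]; [lra|].
  specialize (Hx n ltac:(lia)). lra.
Qed.

Lemma increments_unbounded (x : nat -> R) (eps M : R) (N : nat) : 0 < eps ->
  (forall n, (N <= n)%nat -> x n + eps <= x (S n)) ->
  exists n, (N <= n)%nat /\ M < x n.
Proof.
  intros Heps Hx.
  assert (Hlin : forall m, x N + eps * INR m <= x (N + m)%nat).
  { induction m as [|m IH]; [rewrite Nat.add_0_r; simpl; lra|].
    rewrite Nat.add_succ_r, S_INR. specialize (Hx (N + m)%nat ltac:(lia)). lra. }
  destruct (archimedean_mult eps (M - x N) Heps) as [m Hm].
  exists (N + m)%nat. split; [lia|]. specialize (Hlin m). lra.
Qed.

Lemma steep_not_linearly_bounded (x : nat -> R) (a b : R) (N : nat) :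
  (forall n, (N <= n)%nat -> x n + b + 1 <= x (S n)) ->
  ~ (forall n, x n <= a + b * INR n).
Proof.
  intros Hx Hb.
  destruct (increments_unbounded (fun n => x n - b * INR n) 1 a N)
    as [n [_ Hn]]; [lra| |].
  - intros n Hn. rewrite S_INR. specialize (Hx n Hn). lra.
  - specialize (Hb n). lra.
Qed.

Lemma geometric_not_linearly_bounded (x : nat -> R) (c a b : R) (N : nat) :
  0 <= c < 1 -> 0 < x N -> (forall n, (N <= n)%nat -> x n <= c * x (S n)) ->
  ~ (forall n, x n <= a + b * INR n).
Proof.
  intros Hc H0 Hx.
  assert (Hpos : forall n, (N <= n)%nat -> 0 < x n).
  { intros n Hn. induction Hn as [|n Hn IH]; [exact H0|].
    specialize (Hx n Hn). destruct (Rle_lt_dec (x (S n)) 0); [nra|assumption]. }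
  assert (Hstep : forall n, (N <= n)%nat -> x n + (1 - c) * x (S n) <= x (S n)).
  { intros n Hn. specialize (Hx n Hn). lra. }
  assert (Hmono : forall m n, (N <= m)%nat -> (m <= n)%nat -> x m <= x n).
  { apply nondecreasing_from. intros n Hn.
    pose proof (Hpos (S n) ltac:(lia)). specialize (Hstep n Hn). nra. }
  destruct (increments_unbounded x ((1 - c) * x N) ((b + 1) / (1 - c)) N)
    as [K [HK Hbig]].
  - nra.
  - intros n Hn. specialize (Hstep n Hn).
    pose proof (Hmono N (S n) ltac:(lia) ltac:(lia)). nra.
  - apply (steep_not_linearly_bounded x a b K). intros n Hn.
    specialize (Hstep n ltac:(lia)). pose proof (Hmono K (S n) HK ltac:(lia)).
    assert (Hb1 : (1 - c) * ((b + 1) / (1 - c)) = b + 1) by (field; lra).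
    assert ((1 - c) * ((b + 1) / (1 - c)) <= (1 - c) * x (S n))
      by (apply Rmult_le_compat_l; lra).
    lra.
Qed.

Definition linearly_bounded (z : nat -> R) : Prop :=
  exists C, forall d, Rabs (z d) <= C * (1 + INR d).

Lemma prefix_bounded (z : nat -> R) (T : nat) :
  exists B, forall d, (d < T)%nat -> Rabs (z d) <= B.
Proof.
  induction T as [|T [B HB]]; [exists 0; intros; lia|].
  exists (Rmax B (Rabs (z T))). intros d Hd.
  destruct (Nat.eq_dec d T) as [->|Hne]; [apply Rmax_r|].
  eapply Rle_trans; [apply HB; lia|apply Rmax_l].
Qed.

Lemma linearly_bounded_eventually_affine (z : nat -> R) (T : nat) (a b : R) :
  (forall d, (T <= d)%nat -> z d = a + b * INR d) -> linearly_bounded z.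
Proof.
  intros Hz. destruct (prefix_bounded z T) as [B HB].
  exists (Rabs B + Rabs a + Rabs b). intro d.
  pose proof (pos_INR d). pose proof (Rle_abs B).
  pose proof (Rabs_pos B). pose proof (Rabs_pos a). pose proof (Rabs_pos b).
  assert (0 <= (Rabs B + Rabs a + Rabs b) * INR d) by (apply Rmult_le_pos; lra).
  destruct (Nat.lt_ge_cases d T) as [Hd|Hd].
  - specialize (HB d Hd). lra.
  - rewrite (Hz d Hd).
    eapply Rle_trans; [apply Rabs_triang|].
    rewrite Rabs_mult, (Rabs_pos_eq (INR d)) by lra.
    assert (0 <= (Rabs B + Rabs a) * INR d) by (apply Rmult_le_pos; lra).
    lra.
Qed.

Lemma first_exceeding (f : nat -> R) (r : R) (N : nat) : r < f N ->
  exists T, r < f T /\ (forall T', T = S T' -> f T' <= r).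
Proof.
  induction N as [|N IH]; intro HN.
  - exists 0%nat. split; [exact HN|discriminate].
  - destruct (Rlt_le_dec r (f N)) as [H|H]; [exact (IH H)|].
    exists (S N). split; [exact HN|]. intros T' [= <-]. exact H.
Qed.

Lemma Rmin_plus_r (u v K : R) : Rmin (u + K) (v + K) = Rmin u v + K.
Proof. unfold Rmin. repeat destruct Rle_dec; lra. Qed.

Section SingleUser.

Variables (w p q : R).
Hypotheses (Hw : 0 < w) (Hp : 0 < p <= 1) (Hq : 0 < q <= 1).

Lemma age_cost_le (m n : nat) : (m <= n)%nat -> w * INR m <= w * INR n.
Proof. intros Hmn. apply Rmult_le_compat_l; [lra|apply le_INR, Hmn]. Qed.

Definition damp (x : R) : R := Rmin x ((1 - q) * x).

Lemma damp_nonneg (x : R) : 0 <= x -> damp x = (1 - q) * x.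
Proof. intros Hx. apply Rmin_right. nra. Qed.

Lemma damp_nonpos (x : R) : x <= 0 -> damp x = x.
Proof. intros Hx. apply Rmin_left. nra. Qed.

Lemma damp_le (x y : R) : x <= y -> damp x <= damp y.
Proof.
  intros Hxy. unfold damp. apply Rmin_glb.
  - eapply Rle_trans; [apply Rmin_l|lra].
  - eapply Rle_trans; [apply Rmin_r|nra].
Qed.

Definition reduced_acoe (g : R) (z : nat -> R) : Prop :=
  forall d, g + z d = w * INR d + damp (z (S d)).

Lemma reduced_acoe_pos (g : R) (z : nat -> R) (k : nat) :
  reduced_acoe g z -> linearly_bounded z -> g < w * INR k -> 0 < z k.
Proof.
  intros Hz [C HC] Hk.
  destruct (Rle_lt_dec (z k) 0) as [H0|H0]; [exfalso|exact H0].
  assert (Hneg : forall n, (k <= n)%nat -> z n <= 0).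
  { intros n Hn. induction Hn as [|n Hn IH]; [exact H0|].
    destruct (Rle_lt_dec (z (S n)) 0) as [H1|H1]; [exact H1|exfalso].
    specialize (Hz n). rewrite damp_nonneg in Hz by lra.
    pose proof (age_cost_le k n Hn).
    assert (0 <= (1 - q) * z (S n)) by (apply Rmult_le_pos; lra).
    lra. }
  destruct (archimedean_mult w (C + 1 + g) Hw) as [N HN].
  apply (steep_not_linearly_bounded (fun n => - z n) C C (k + N)).
  - intros n Hn. specialize (Hz n).
    rewrite damp_nonpos in Hz by (apply Hneg; lia).
    pose proof (age_cost_le N n ltac:(lia)). lra.
  - intro n. specialize (HC n). pose proof (Rle_abs (- z n)).
    rewrite Rabs_Ropp in *. lra.
Qed.

Lemma reduced_acoe_antitone (g g' : R) (z z' : nat -> R) :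
  reduced_acoe g z -> linearly_bounded z ->
  reduced_acoe g' z' -> linearly_bounded z' ->
  g <= g' -> forall d, z' d <= z d.
Proof.
  intros Hz Bz Hz' Bz' Hg d0.
  destruct (Rle_lt_dec (z' d0) (z d0)) as [H|H]; [exact H|exfalso].
  assert (Hgap : forall n, (d0 <= n)%nat -> z n < z' n).
  { intros n Hn. induction Hn as [|n Hn IH]; [exact H|].
    destruct (Rle_lt_dec (z' (S n)) (z (S n))) as [H1|H1]; [exfalso|exact H1].
    pose proof (damp_le _ _ H1). specialize (Hz n). specialize (Hz' n). lra. }
  destruct (archimedean_mult w g Hw) as [K HK].
  assert (Hpos : forall n, (K <= n)%nat -> 0 < z n).
  { intros n Hn. apply (reduced_acoe_pos g); [exact Hz|exact Bz|].
    pose proof (age_cost_le K n Hn). lra. }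
  destruct Bz as [C HC], Bz' as [C' HC'].
  apply (geometric_not_linearly_bounded (fun n => z' n - z n) (1 - q)
           (C + C') (C + C') (d0 + K)).
  - lra.
  - pose proof (Hgap (d0 + K)%nat ltac:(lia)). lra.
  - intros n Hn. specialize (Hz n). specialize (Hz' n).
    pose proof (Hpos (S n) ltac:(lia)). pose proof (Hgap (S n) ltac:(lia)).
    rewrite damp_nonneg in Hz, Hz' by lra. lra.
  - intro n. specialize (HC n). specialize (HC' n).
    pose proof (Rle_abs (z' n)). pose proof (Rle_abs (- z n)).
    rewrite Rabs_Ropp in *. lra.
Qed.

(** [affine_branch] solves the recursion where [z (d+1) >= 0] and
    [quadratic_branch] (the backward sums of [w d - g]) where [z (d+1) <= 0];
    they agree at the threshold [T]. *)
Definition affine_branch (g : R) (d : nat) : R := (w * (INR d - 1) + w / q - g) / q.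

Definition quadratic_branch (g : R) (T d : nat) : R :=
  affine_branch g T + w * (INR T * (INR T - 1) - INR d * (INR d - 1)) / 2
  - (INR T - INR d) * g.

Definition threshold_sol (g : R) (T d : nat) : R :=
  if (T <=? d)%nat then affine_branch g d else quadratic_branch g T d.

Lemma q_mul_affine_branch (g : R) (d : nat) :
  q * affine_branch g d = w * (INR d - 1) + w / q - g.
Proof. unfold affine_branch. field. lra. Qed.

Lemma threshold_sol_above (g : R) (T d : nat) :
  (T <= d)%nat -> threshold_sol g T d = affine_branch g d.
Proof. intros Hd. unfold threshold_sol. apply Nat.leb_le in Hd. now rewrite Hd. Qed.

Lemma threshold_sol_below (g : R) (T d : nat) :
  (d <= T)%nat -> threshold_sol g T d = quadratic_branch g T d.
Proof.
  intros Hd. unfold threshold_sol. destruct (Nat.leb_spec T d); [|reflexivity].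
  assert (d = T) by lia. subst. unfold quadratic_branch. field.
Qed.

Lemma w_le_w_div_q : w <= w / q.
Proof.
  apply (Rmult_le_reg_l q); [lra|].
  replace (q * (w / q)) with w by (field; lra). nra.
Qed.

Lemma quadratic_branch_nonpos (g : R) (T d : nat) :
  w * (INR T - 1) + w / q <= g -> (d <= T)%nat -> quadratic_branch g T d <= 0.
Proof.
  intros Hg Hd. apply le_INR in Hd. pose proof w_le_w_div_q.
  assert (Haff : affine_branch g T <= 0)
    by (pose proof (q_mul_affine_branch g T); nra).
  unfold quadratic_branch. set (t := INR T) in *. set (x := INR d) in *.
  replace (w * (t * (t - 1) - x * (x - 1)) / 2 - (t - x) * g)
    with ((t - x) * (w * (t + x - 1) / 2 - g)) by field.
  assert (w * (t + x - 1) / 2 <= g).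
  { assert (w * (t + x - 1) <= w * (2 * t - 1)) by (apply Rmult_le_compat_l; lra).
    lra. }
  nra.
Qed.

Lemma threshold_sol_acoe (g : R) (T : nat) :
  (T = 0%nat \/ w * (INR T - 1) + w / q <= g) -> g < w * INR T + w / q ->
  reduced_acoe g (threshold_sol g T).
Proof.
  intros Hlow Hup d. destruct (Nat.le_gt_cases T d) as [Hd|Hd].
  - rewrite !threshold_sol_above by lia.
    assert (Hnn : 0 <= affine_branch g (S d)).
    { pose proof (q_mul_affine_branch g (S d)). rewrite S_INR in *.
      pose proof (age_cost_le T d Hd). nra. }
    rewrite damp_nonneg by exact Hnn. unfold affine_branch. rewrite S_INR.
    field. lra.
  - assert (HT : w * (INR T - 1) + w / q <= g) by (destruct Hlow; [lia|assumption]).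
    rewrite !threshold_sol_below by lia.
    rewrite damp_nonpos by (apply quadratic_branch_nonpos; [exact HT|lia]).
    unfold quadratic_branch. rewrite S_INR. field.
Qed.

Lemma threshold_sol_bounded (g : R) (T : nat) : linearly_bounded (threshold_sol g T).
Proof.
  apply (linearly_bounded_eventually_affine _ T ((w / q - w - g) / q) (w / q)).
  intros d Hd. rewrite threshold_sol_above by exact Hd.
  unfold affine_branch. field. lra.
Qed.

Definition completion_value (h : state -> R) : R :=
  p * h (Some 0%nat) + (1 - p) * h None.

Definition reduced_h (lam : R) (h : state -> R) (d : nat) : R :=
  h (Some d) - completion_value h - lam / q.

Lemma Vbar_passive_reduced (lam : R) (h : state -> R) (d : nat) :
  Vbar w p q lam h d false
  = reduced_h lam h (S d) + (w * INR d + completion_value h + lam / q).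
Proof. unfold Vbar, reduced_h. field. lra. Qed.

Lemma Vbar_active_reduced (lam : R) (h : state -> R) (d : nat) :
  Vbar w p q lam h d true
  = (1 - q) * reduced_h lam h (S d) + (w * INR d + completion_value h + lam / q).
Proof. unfold Vbar, reduced_h, completion_value. field. lra. Qed.

Lemma passive_set_reduced (lam : R) (h : state -> R) (d : nat) :
  passive_set w p q lam h (Some d) <-> reduced_h lam h (S d) <= 0.
Proof.
  unfold passive_set. rewrite Vbar_passive_reduced, Vbar_active_reduced.
  split; intro; nra.
Qed.

Lemma avg_cost_opt_reduced (lam g : R) (h : state -> R) :
  avg_cost_opt w p q lam g h ->
  reduced_acoe g (reduced_h lam h) /\ linearly_bounded (reduced_h lam h) /\
  p * q * reduced_h lam h 0 + p * lam = (1 - p) * q * g.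
Proof.
  intros [Hempty [Hjob [C HC]]]. split; [|split].
  - intro d. specialize (Hjob d).
    rewrite Vbar_passive_reduced, Vbar_active_reduced, Rmin_plus_r in Hjob.
    unfold damp. unfold reduced_h at 1. lra.
  - exists (C + Rabs (completion_value h + lam / q)). intro d.
    unfold reduced_h. specialize (HC d).
    replace (h (Some d) - completion_value h - lam / q)
      with (h (Some d) + - (completion_value h + lam / q)) by ring.
    eapply Rle_trans; [apply Rabs_triang|]. rewrite Rabs_Ropp.
    pose proof (Rabs_pos (completion_value h + lam / q)).
    assert (0 <= Rabs (completion_value h + lam / q) * INR d)
      by (apply Rmult_le_pos; [lra|apply pos_INR]).
    lra.
  - assert (Hg : g = p * (h (Some 0%nat) - h None)) by lra.
    unfold reduced_h, completion_value. rewrite Hg. field. lra.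
Qed.

(** The empty state is pinned down by [g = p (h(0,0) - h(0,∞))]. *)
Definition h_of_reduced (lam g : R) (z : nat -> R) (s : state) : R :=
  match s with
  | None => z 0%nat + lam / q - g / p
  | Some d => z d + lam / q
  end.

Lemma completion_value_h_of_reduced (lam g : R) (z : nat -> R) :
  p * q * z 0%nat + p * lam = (1 - p) * q * g ->
  completion_value (h_of_reduced lam g z) = 0.
Proof.
  intros Hb. unfold completion_value, h_of_reduced.
  replace (p * (z 0%nat + lam / q) + (1 - p) * (z 0%nat + lam / q - g / p))
    with ((p * q * z 0%nat + p * lam - (1 - p) * q * g) / (p * q)) by (field; lra).
  rewrite Hb. field. lra.
Qed.

Lemma reduced_h_of_reduced (lam g : R) (z : nat -> R) :
  p * q * z 0%nat + p * lam = (1 - p) * q * g ->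
  forall d, reduced_h lam (h_of_reduced lam g z) d = z d.
Proof.
  intros Hb d. unfold reduced_h.
  rewrite completion_value_h_of_reduced by exact Hb. simpl. ring.
Qed.

Lemma avg_cost_opt_of_reduced (lam g : R) (z : nat -> R) :
  reduced_acoe g z -> linearly_bounded z ->
  p * q * z 0%nat + p * lam = (1 - p) * q * g ->
  avg_cost_opt w p q lam g (h_of_reduced lam g z).
Proof.
  intros Hz [C HC] Hb. split; [|split].
  - simpl. field. lra.
  - intro d. specialize (Hz d).
    rewrite Vbar_passive_reduced, Vbar_active_reduced, Rmin_plus_r.
    rewrite reduced_h_of_reduced, completion_value_h_of_reduced by exact Hb.
    unfold damp in Hz. simpl. lra.
  - exists (C + Rabs (lam / q)). intro d. simpl.
    eapply Rle_trans; [apply Rabs_triang|]. specialize (HC d).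
    pose proof (Rabs_pos (lam / q)).
    assert (0 <= Rabs (lam / q) * INR d) by (apply Rmult_le_pos; [lra|apply pos_INR]).
    lra.
Qed.

Lemma avg_cost_le (lam1 lam2 g1 g2 : R) (h1 h2 : state -> R) :
  lam1 <= lam2 ->
  avg_cost_opt w p q lam1 g1 h1 -> avg_cost_opt w p q lam2 g2 h2 -> g1 <= g2.
Proof.
  intros Hlam H1 H2.
  destruct (avg_cost_opt_reduced lam1 g1 h1 H1) as [Z1 [B1 E1]].
  destruct (avg_cost_opt_reduced lam2 g2 h2 H2) as [Z2 [B2 E2]].
  set (z1 := reduced_h lam1 h1) in *. set (z2 := reduced_h lam2 h2) in *.
  destruct (Rle_lt_dec g1 g2) as [H|H]; [exact H|exfalso].
  pose proof (reduced_acoe_antitone g2 g1 z2 z1 Z2 B2 Z1 B1 (Rlt_le _ _ H) 1%nat) as Hz1.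
  assert (Hz0 : g1 - g2 <= z2 0%nat - z1 0%nat).
  { pose proof (damp_le _ _ Hz1). pose proof (Z1 0%nat). pose proof (Z2 0%nat). lra. }
  assert (0 <= (1 - p) * q * (g1 - g2)) by (apply Rmult_le_pos; nra).
  assert (0 < p * q * (z2 0%nat - z1 0%nat)) by (apply Rmult_lt_0_compat; nra).
  nra.
Qed.

Lemma passive_set_monotone (lam1 lam2 g1 g2 : R) (h1 h2 : state -> R) (s : state) :
  lam1 <= lam2 ->
  avg_cost_opt w p q lam1 g1 h1 -> avg_cost_opt w p q lam2 g2 h2 ->
  passive_set w p q lam1 h1 s -> passive_set w p q lam2 h2 s.
Proof.
  intros Hlam H1 H2. destruct s as [d|]; [|trivial].
  rewrite !passive_set_reduced.
  destruct (avg_cost_opt_reduced lam1 g1 h1 H1) as [Z1 [B1 _]].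
  destruct (avg_cost_opt_reduced lam2 g2 h2 H2) as [Z2 [B2 _]].
  pose proof (reduced_acoe_antitone g1 g2 _ _ Z1 B1 Z2 B2
                (avg_cost_le lam1 lam2 g1 g2 h1 h2 Hlam H1 H2) (S d)).
  lra.
Qed.

(** The activation cost for which [threshold_sol g T] satisfies the boundary
    relation. *)
Definition activation_slope (T : nat) : R := (1 - p) * q / p + 1 + q * INR T.

Definition activation_cost (T : nat) (g : R) : R :=
  g * activation_slope T - w * INR T - w * (1 - q) / q
  - q * w * INR T * (INR T - 1) / 2.

Lemma threshold_sol_boundary (g : R) (T : nat) :
  p * q * threshold_sol g T 0 + p * activation_cost T g = (1 - p) * q * g.
Proof.
  rewrite threshold_sol_below by lia.
  unfold quadratic_branch, affine_branch, activation_cost, activation_slope. simpl.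
  field. lra.
Qed.

Lemma activation_slope_pos (T : nat) : 0 < activation_slope T.
Proof.
  unfold activation_slope.
  assert (0 <= (1 - p) * q / p).
  { apply Rmult_le_pos; [nra|]. left. apply Rinv_0_lt_compat. lra. }
  assert (0 <= q * INR T) by (apply Rmult_le_pos; [lra|apply pos_INR]).
  lra.
Qed.

Lemma activation_cost_le_iff (T : nat) (x y : R) :
  activation_cost T x <= activation_cost T y <-> x <= y.
Proof.
  pose proof (activation_slope_pos T).
  assert (E : activation_cost T y - activation_cost T x = (y - x) * activation_slope T)
    by (unfold activation_cost; ring).
  split; intro; nra.
Qed.

Lemma activation_cost_breakpoint (T : nat) :
  activation_cost (S T) (w * INR T + w / q) = activation_cost T (w * INR T + w / q).
Proof. unfold activation_cost, activation_slope. rewrite S_INR. field. lra. Qed.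

Lemma activation_cost_ge (T : nat) : w * INR T <= activation_cost T (w * INR T + w / q).
Proof.
  pose proof (activation_slope_pos T).
  assert (E : activation_cost T (w * INR T + w / q) - w * INR T
              = (w * INR T + w / q) * ((1 - p) * q / p)
                + q * w * INR T * (INR T + 1) / 2 + w)
    by (unfold activation_cost, activation_slope; field; lra).
  assert (0 <= (1 - p) * q / p).
  { apply Rmult_le_pos; [nra|]. left. apply Rinv_0_lt_compat. lra. }
  assert (0 <= w / q) by (pose proof w_le_w_div_q; lra).
  assert (0 <= w * INR T) by (apply Rmult_le_pos; [lra|apply pos_INR]).
  assert (0 <= (w * INR T + w / q) * ((1 - p) * q / p)) by (apply Rmult_le_pos; lra).
  assert (0 <= q * w * INR T * (INR T + 1))
    by (pose proof (pos_INR T); repeat apply Rmult_le_pos; lra).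
  lra.
Qed.

Lemma reduced_solution_exists (lam : R) :
  exists g z, reduced_acoe g z /\ linearly_bounded z /\
    p * q * z 0%nat + p * lam = (1 - p) * q * g.
Proof.
  set (b T := activation_cost T (w * INR T + w / q)).
  destruct (archimedean_mult w lam Hw) as [N HN].
  destruct (first_exceeding b lam N) as [T [HbT Hprev]].
  { pose proof (activation_cost_ge N). unfold b. lra. }
  pose proof (activation_slope_pos T).
  set (g := (lam - activation_cost T 0) / activation_slope T).
  assert (Hlam : activation_cost T g = lam).
  { unfold g, activation_cost. field. lra. }
  exists g, (threshold_sol g T). split; [|split].
  - apply threshold_sol_acoe.
    + destruct T as [|T]; [left; reflexivity|right].
      specialize (Hprev T eq_refl). unfold b in Hprev.
      rewrite <- activation_cost_breakpoint, <- Hlam, activation_cost_le_iff in Hprev.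
      rewrite S_INR. lra.
    + destruct (Rlt_le_dec g (w * INR T + w / q)) as [Hlt|Hge]; [exact Hlt|].
      rewrite <- (activation_cost_le_iff T) in Hge. unfold b in HbT. lra.
  - apply threshold_sol_bounded.
  - rewrite <- Hlam. apply threshold_sol_boundary.
Qed.

Lemma avg_cost_opt_exists (lam : R) : exists g h, avg_cost_opt w p q lam g h.
Proof.
  destruct (reduced_solution_exists lam) as [g [z [Hz [Bz Hb]]]].
  exists g, (h_of_reduced lam g z). exact (avg_cost_opt_of_reduced lam g z Hz Bz Hb).
Qed.

Lemma passive_set_eventually (d : nat) :
  exists L, forall lam g (h : state -> R),
    L <= lam -> avg_cost_opt w p q lam g h -> passive_set w p q lam h (Some d).
Proof.
  set (G := w * INR d + w / q).
  set (L := activation_cost (S d) G).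
  set (Z := threshold_sol G (S d)).
  assert (Hb : p * q * Z 0%nat + p * L = (1 - p) * q * G) by apply threshold_sol_boundary.
  assert (HZ : reduced_acoe G Z).
  { apply threshold_sol_acoe; rewrite S_INR; unfold G; [right|]; lra. }
  exists L. intros lam g h HL Hopt.
  apply (passive_set_monotone L lam G g (h_of_reduced L G Z) h); [exact HL| |exact Hopt|].
  - exact (avg_cost_opt_of_reduced L G Z HZ (threshold_sol_bounded G (S d)) Hb).
  - rewrite passive_set_reduced, reduced_h_of_reduced by exact Hb.
    unfold Z. rewrite threshold_sol_above by lia.
    pose proof (q_mul_affine_branch G (S d)). rewrite S_INR in *. unfold G in *. nra.
Qed.

Lemma user_indexable_geometric : user_indexable w p q.
Proof.
  split; [|split].
  - intros lam _. apply avg_cost_opt_exists.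
  - intros lam1 lam2 g1 g2 h1 h2 _ Hlam H1 H2 s.
    exact (passive_set_monotone lam1 lam2 g1 g2 h1 h2 s Hlam H1 H2).
  - intros [d|].
    + apply passive_set_eventually.
    + exists 0. intros. exact I.
Qed.

End SingleUser.

Theorem theorem1 (N : nat) (M : nat -> nat) (w p : nat -> nat -> R) (q : nat -> R)
  (Hw : forall i j, (i < N)%nat -> (j < M i)%nat -> 0 < w i j)
  (Hp : forall i j, (i < N)%nat -> (j < M i)%nat -> 0 < p i j <= 1)
  (Hq : forall i, (i < N)%nat -> 0 < q i <= 1) :
  problem_indexable N M w p q.
Proof.
  intros i j Hi Hj.
  exact (user_indexable_geometric (w i j) (p i j) (q i)
           (Hw i j Hi Hj) (Hp i j Hi Hj) (Hq i Hi)).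
Qed.
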